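(* Let $v>0$, $q>0$ and let $\kappa\ge -q/4$ be real; put $s=\frac12+\sqrt{\frac{\kappa}{q}+\frac14}$. For each integer $n\ge0$ with $n+s<\sqrt{v/q}$, the function $$\psi_n(r)=e^{-\left(\frac{v}{2q(n+s)}-\frac{n+s}{2}\right)r}\left(1-q\,e^{-r}\right)^{s}\;{}_2F_1\!\left(-n,\,s+\frac{v}{q(n+s)};\,1-n-s+\frac{v}{q(n+s)};\,q\,e^{-r}\right)$$ satisfies, on $r\in(\log q,\infty)$, $$-\psi_n''(r)+\left(\frac{\kappa\,e^{-r}}{(1-q\,e^{-r})^2}-\frac{v\,e^{-r}}{1-q\,e^{-r}}\right)\psi_n(r)=\mathfrak E_n\,\psi_n(r),\qquad \mathfrak E_n=-\left(\frac{v}{2q(n+s)}-\frac{n+s}{2}\right)^2,$$ together with $\psi_n(\log q)=\psi_n(\infty)=0$. In particular, for $\kappa=q\,j(j+1)$ with $j\in\{0,1,2,\dots\}$ one has $s=j+1$ and $\mathfrak E_n=-\left(\frac{v}{2q(n+j+1)}-\frac{n+j+1}{2}\right)^2$.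
   Context: ${}_2F_1(\alpha,\beta;\gamma;z)=\sum_{k\ge0}\frac{(\alpha)_k(\beta)_k}{(\gamma)_k k!}z^k$ is the Gauss hypergeometric function, with $(a)_k$ the Pochhammer symbol; for $\alpha=-n$ it is a polynomial in $z$. *)

From Stdlib Require Import Reals Factorial.
From Coquelicot Require Import Coquelicot.
Open Scope R_scope.

Fixpoint poch (a : R) (k : nat) : R :=
  match k with
  | O => 1
  | S k' => poch a k' * (a + INR k')
  end.

(* Gauss hypergeometric function 2F1(-n, b; c; z), which for alpha = -n is a
   polynomial: the series terminates, all terms with k > n vanish. *)
Definition hyp2F1_neg (n : nat) (b c z : R) : R :=
  sum_f_R0 (fun k => poch (- INR n) k * poch b k / (poch c k * INR (fact k)) * z ^ k) n.

(* Real power x^y for x >= 0, with the convention 0^y = 0 (used for y > 0). *)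
Definition rpow (x y : R) : R := if Rle_dec x 0 then 0 else Rpower x y.

Definition s_par (q kappa : R) : R := / 2 + sqrt (kappa / q + / 4).

Definition alpha_n (v q kappa : R) (n : nat) : R :=
  v / (2 * q * (INR n + s_par q kappa)) - (INR n + s_par q kappa) / 2.

Definition psi_n (v q kappa : R) (n : nat) (r : R) : R :=
  let s := s_par q kappa in
  exp (- alpha_n v q kappa n * r) * rpow (1 - q * exp (- r)) s *
  hyp2F1_neg n (s + v / (q * (INR n + s)))
                (1 - INR n - s + v / (q * (INR n + s))) (q * exp (- r)).

Definition E_n (v q kappa : R) (n : nat) : R := - (alpha_n v q kappa n) ^ 2.

Definition potential (v q kappa r : R) : R :=
  kappa * exp (- r) / (1 - q * exp (- r)) ^ 2 - v * exp (- r) / (1 - q * exp (- r)).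

From Stdlib Require Import Reals Lra Factorial.
From Coquelicot Require Import Coquelicot.
Open Scope R_scope.

(* Write z = q e^{-r} and u = 1 - z, and call e^{-beta r} u^s a mode.  With
   g = -beta + s z/u its logarithmic derivative, a mode f satisfies
   f'' = f (g^2 - s z/u^2), and since kappa = q s (s - 1) the operator
   -d^2 + V + alpha^2 sends the mode of exponent alpha + k to q^{-k} times
   the mode of exponent alpha, multiplied by
   z^k (-k (2 alpha + k) + B_k z) / u, where B_k = (k+s)^2 + 2 alpha (k+s) - v/q.
   Since psi_n = sum_k a_k q^k (mode of exponent alpha + k), where a_k are
   the coefficients of 2F1(-n, b; c; z), and these satisfy
   a_{k+1} (k+1) (2 alpha + k + 1) = a_k B_k, the resulting sum telescopes to
   a multiple of B_n, which vanishes for alpha = alpha_n.  The hypothesis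
   n + s < sqrt (v/q) is exactly alpha_n > 0, which gives the decay at
   infinity; the zero at r = log q is the factor u^s. *)

Lemma poch_gt0 (c : R) (k : nat) : 0 < c -> 0 < poch c k.
Proof.
  intros Hc; induction k as [|k IH]; simpl; [lra|].
  apply Rmult_lt_0_compat; [exact IH|]. pose proof (pos_INR k); lra.
Qed.

Definition hyp_coef (n : nat) (b c : R) (k : nat) : R :=
  poch (- INR n) k * poch b k / (poch c k * INR (fact k)).

Lemma hyp_coef_succ (n : nat) (b c : R) (k : nat) : 0 < c ->
  hyp_coef n b c (S k) * (INR (S k) * (c + INR k))
  = hyp_coef n b c k * ((INR k - INR n) * (b + INR k)).
Proof.
  intros Hc. unfold hyp_coef. simpl poch.
  change (fact (S k)) with (S k * fact k)%nat. rewrite mult_INR, S_INR.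
  pose proof (poch_gt0 c k Hc). pose proof (INR_fact_neq_0 k). pose proof (pos_INR k).
  field. repeat split; lra.
Qed.

Lemma Rabs_hyp2F1_neg_le (n : nat) (b c z : R) : 0 <= z <= 1 ->
  Rabs (hyp2F1_neg n b c z) <= sum_f_R0 (fun k => Rabs (hyp_coef n b c k)) n.
Proof.
  intros Hz. unfold hyp2F1_neg. eapply Rle_trans; [apply Rsum_abs|].
  apply sum_Rle. intros k _. fold (hyp_coef n b c k).
  rewrite Rabs_mult, <- RPow_abs, (Rabs_pos_eq z) by lra.
  assert (Hzk : 0 <= z ^ k <= 1).
  { split; [apply pow_le; lra|]. rewrite <- (pow1 k). apply pow_incr; lra. }
  pose proof (Rabs_pos (hyp_coef n b c k)). nra.
Qed.

Lemma sum_f_R0_lincomb (f g : nat -> R) (x y : R) (n : nat) :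
  sum_f_R0 (fun k => x * f k + y * g k) n = x * sum_f_R0 f n + y * sum_f_R0 g n.
Proof. induction n as [|n IH]; simpl; [|rewrite IH]; ring. Qed.

Lemma sum_pow_telescope (a A B : nat -> R) (z : R) (m : nat) :
  A 0%nat = 0 -> (forall k, a (S k) * A (S k) = - (a k * B k)) ->
  sum_f_R0 (fun k => a k * z ^ k * (A k + B k * z)) m = a m * B m * z ^ S m.
Proof.
  intros HA0 HaA. induction m as [|m IH]; simpl.
  - rewrite HA0. ring.
  - rewrite IH. simpl.
    replace (a (S m) * (z * z ^ m) * (A (S m) + B (S m) * z))
      with (a (S m) * A (S m) * (z * z ^ m) + a (S m) * B (S m) * (z * z ^ m) * z) by ring.
    rewrite HaA. ring.
Qed.

Lemma is_derive_sum_f_R0 (f : nat -> R -> R) (df : nat -> R) (n : nat) (x : R) :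
  (forall k, is_derive (f k) x (df k)) ->
  is_derive (fun y => sum_f_R0 (fun k => f k y) n) x (sum_f_R0 df n).
Proof.
  intros Hf. induction n as [|n IH]; simpl; [apply Hf|].
  apply (is_derive_plus (fun y => sum_f_R0 (fun k => f k y) n) (f (S n))); [exact IH | apply Hf].
Qed.

Lemma is_derive_Derive_on_open (D : R -> Prop) (f g g1 g2 : R -> R) :
  (forall x, D x -> locally x D) ->
  (forall x, D x -> f x = g x) ->
  (forall x, D x -> is_derive g x (g1 x)) ->
  (forall x, D x -> is_derive g1 x (g2 x)) ->
  forall x, D x -> is_derive f x (g1 x) /\ is_derive (Derive f) x (g2 x).
Proof.
  intros HD Hfg Hg Hg1.
  assert (Hf : forall x, D x -> is_derive f x (g1 x)).
  { intros x Hx. apply (is_derive_ext_loc g); [|exact (Hg x Hx)].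
    apply (filter_imp D); [|exact (HD x Hx)]. intros t Ht. symmetry. exact (Hfg t Ht). }
  intros x Hx. split; [exact (Hf x Hx)|].
  apply (is_derive_ext_loc g1); [|exact (Hg1 x Hx)].
  apply (filter_imp D); [|exact (HD x Hx)].
  intros t Ht. symmetry. exact (is_derive_unique _ _ _ (Hf t Ht)).
Qed.

Lemma is_lim_exp_decay (f : R -> R) (M a : R) : 0 < a ->
  (exists x0, forall x, x0 < x -> Rabs (f x) <= M * exp (- a * x)) ->
  is_lim f p_infty 0.
Proof.
  intros Ha [x0 Hbound].
  assert (Hexp : is_lim (fun x => exp (- a * x)) p_infty 0).
  { apply (is_lim_comp exp (fun x => - a * x) p_infty 0 m_infty).
    - apply is_lim_exp_m.
    - assert (Hm : Rbar_mult (- a) p_infty = m_infty).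
      { unfold Rbar_mult, Rbar_mult'. destruct (Rle_dec 0 (- a)); [exfalso; lra | reflexivity]. }
      rewrite <- Hm. apply (is_lim_scal_l (fun x => x)), is_lim_id.
    - exists 0. intros x _ E. discriminate. }
  apply (is_lim_le_le_loc (fun x => - (M * exp (- a * x))) (fun x => M * exp (- a * x))).
  - exists x0. intros x Hx. apply Rabs_le_between, Hbound, Hx.
  - replace (Finite 0) with (Rbar_opp (Rbar_mult M 0)) by (simpl; f_equal; ring).
    apply is_lim_opp, is_lim_scal_l, Hexp.
  - replace (Finite 0) with (Rbar_mult M 0) by (simpl; f_equal; ring).
    apply is_lim_scal_l, Hexp.
Qed.

Lemma rpow_le_1 (x y : R) : x <= 1 -> 0 <= y -> 0 <= rpow x y <= 1.
Proof.
  intros Hx1 Hy. unfold rpow. destruct (Rle_dec x 0) as [|Hx0]; [lra|].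
  unfold Rpower. split; [left; apply exp_pos|].
  assert (Hln : ln x <= 0) by (rewrite <- ln_1; apply ln_le; lra).
  rewrite <- exp_0. destruct (Rle_lt_or_eq_dec (y * ln x) 0) as [Hlt|Heq]; [nra| |].
  - left. apply exp_increasing, Hlt.
  - rewrite Heq. apply Rle_refl.
Qed.

Section Modes.

Variables q s v : R.

Definition mode (beta r : R) : R := exp (- beta * r + s * ln (1 - q * exp (- r))).

Definition mode_logder (beta r : R) : R :=
  - beta + s * (q * exp (- r)) / (1 - q * exp (- r)).

Definition dmode (beta r : R) : R := mode beta r * mode_logder beta r.

Definition d2mode (beta r : R) : R :=
  mode beta r * (mode_logder beta r ^ 2 - s * (q * exp (- r)) / (1 - q * exp (- r)) ^ 2).

Definition indicial (alpha x : R) : R := (x + s) ^ 2 + 2 * alpha * (x + s) - v / q.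

Lemma is_derive_mode (beta r : R) : 0 < 1 - q * exp (- r) ->
  is_derive (mode beta) r (dmode beta r).
Proof.
  intros Hu. unfold dmode, mode, mode_logder. auto_derive; [lra|]. unfold Rminus. field. lra.
Qed.

Lemma is_derive_dmode (beta r : R) : 0 < 1 - q * exp (- r) ->
  is_derive (dmode beta) r (d2mode beta r).
Proof.
  intros Hu. unfold d2mode, dmode, mode, mode_logder. auto_derive; [repeat split; lra|].
  unfold Rminus. field. lra.
Qed.

Lemma mode_shift (beta : R) (k : nat) (r : R) :
  q ^ k * mode (beta + INR k) r = mode beta r * (q * exp (- r)) ^ k.
Proof.
  rewrite Rpow_mult_distr, <- (Rpower_pow k (exp (- r))) by apply exp_pos.
  unfold mode, Rpower. rewrite ln_exp.
  replace (- (beta + INR k) * r + s * ln (1 - q * exp (- r)))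
    with (- beta * r + s * ln (1 - q * exp (- r)) + INR k * - r) by ring.
  rewrite exp_plus. ring.
Qed.

Lemma mode_defect (alpha : R) (k : nat) (r : R) : q <> 0 -> 1 - q * exp (- r) <> 0 ->
  - d2mode (alpha + INR k) r
  + (potential v q (q * s * (s - 1)) r + alpha ^ 2) * mode (alpha + INR k) r
  = mode (alpha + INR k) r
    * ((- (INR k * (2 * alpha + INR k)) + indicial alpha (INR k) * (q * exp (- r)))
       / (1 - q * exp (- r))).
Proof.
  intros Hq Hu. unfold d2mode, mode_logder, potential, indicial. field. tauto.
Qed.

Variables (alpha : R) (a : nat -> R) (n : nat).

(* By [mode_shift], [mode_comb mode r] is [mode alpha r] times the polynomial
   sum_k a_k z^k; shifting the exponents instead makes every term a single
   mode, so that it can be differentiated termwise. *)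
Definition mode_comb (w : R -> R -> R) (r : R) : R :=
  sum_f_R0 (fun k => a k * q ^ k * w (alpha + INR k) r) n.

Lemma is_derive_mode_comb (w dw : R -> R -> R) (r : R) :
  (forall beta, is_derive (w beta) r (dw beta r)) ->
  is_derive (mode_comb w) r (mode_comb dw r).
Proof.
  intros Hw. apply (is_derive_sum_f_R0 (fun k t => a k * q ^ k * w (alpha + INR k) t)).
  intro k. apply is_derive_scal, Hw.
Qed.

Hypothesis coef_succ : forall k,
  a (S k) * (INR (S k) * (2 * alpha + INR (S k))) = a k * indicial alpha (INR k).
Hypothesis indicial_top : indicial alpha (INR n) = 0.

Lemma mode_comb_eigen (r : R) : q <> 0 -> 1 - q * exp (- r) <> 0 ->
  - mode_comb d2mode r + potential v q (q * s * (s - 1)) r * mode_comb mode r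
  = - alpha ^ 2 * mode_comb mode r.
Proof.
  intros Hq Hu.
  set (z := q * exp (- r)).
  set (defect k := - (INR k * (2 * alpha + INR k)) + indicial alpha (INR k) * z).
  enough (H : - 1 * mode_comb d2mode r
              + (potential v q (q * s * (s - 1)) r + alpha ^ 2) * mode_comb mode r = 0)
    by lra.
  unfold mode_comb. rewrite <- sum_f_R0_lincomb.
  rewrite (sum_eq _ (fun k => a k * z ^ k * defect k * (mode alpha r / (1 - z)))).
  - rewrite <- scal_sum.
    rewrite (sum_pow_telescope a (fun k => - (INR k * (2 * alpha + INR k)))
               (fun k => indicial alpha (INR k))).
    + rewrite indicial_top. ring.
    + simpl. ring.
    + intro k. rewrite <- coef_succ. ring.
  - intros k _.
    transitivity (a k * q ^ k * (mode (alpha + INR k) r * (defect k / (1 - z)))).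
    { unfold defect, z. rewrite <- mode_defect by assumption. ring. }
    rewrite Rmult_assoc, <- (Rmult_assoc (q ^ k)), mode_shift. fold z.
    field. exact Hu.
Qed.

End Modes.

Lemma q_exp_neg_bounds (q r : R) : 0 < q -> ln q < r -> 0 < q * exp (- r) < 1.
Proof.
  intros Hq Hr. split; [apply Rmult_lt_0_compat; [lra | apply exp_pos]|].
  rewrite <- (exp_ln q) at 1 by lra. rewrite <- exp_plus, <- exp_0.
  apply exp_increasing. lra.
Qed.

Lemma s_par_ge_half (q kappa : R) : / 2 <= s_par q kappa.
Proof. unfold s_par. pose proof (sqrt_pos (kappa / q + / 4)). lra. Qed.

Lemma kappa_eq_s_par (q kappa : R) : 0 < q -> - q / 4 <= kappa ->
  kappa = q * s_par q kappa * (s_par q kappa - 1).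
Proof.
  intros Hq Hk. unfold s_par.
  assert (Hd : 0 <= kappa / q + / 4).
  { replace (kappa / q + / 4) with ((kappa + q / 4) / q) by (field; lra).
    apply Rdiv_le_0_compat; lra. }
  replace (q * (/ 2 + sqrt (kappa / q + / 4)) * (/ 2 + sqrt (kappa / q + / 4) - 1))
    with (q * (sqrt (kappa / q + / 4) * sqrt (kappa / q + / 4) - / 4)) by field.
  rewrite sqrt_sqrt by exact Hd. field. lra.
Qed.

Lemma s_par_integer (q : R) (j : nat) : 0 < q -> s_par q (q * INR j * (INR j + 1)) = INR j + 1.
Proof.
  intros Hq. unfold s_par. pose proof (pos_INR j).
  replace (q * INR j * (INR j + 1) / q + / 4) with ((INR j + / 2) * (INR j + / 2))
    by (field; lra).
  rewrite sqrt_square by lra. lra.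
Qed.

Section Eigenfunction.

Variables (v q kappa : R) (n : nat).
Hypotheses (v_gt0 : 0 < v) (q_gt0 : 0 < q) (kappa_ge : - q / 4 <= kappa).
Hypothesis n_lt : INR n + s_par q kappa < sqrt (v / q).

Lemma n_add_s_par_gt0 : 0 < INR n + s_par q kappa.
Proof. pose proof (s_par_ge_half q kappa). pose proof (pos_INR n). lra. Qed.

Lemma alpha_n_gt0 : 0 < alpha_n v q kappa n.
Proof.
  pose proof n_add_s_par_gt0 as Hm0.
  set (m := INR n + s_par q kappa) in *.
  assert (Hm : m * m < v / q).
  { assert (Hvq : 0 <= v / q) by (apply Rdiv_le_0_compat; lra).
    rewrite <- (sqrt_sqrt (v / q) Hvq). apply Rmult_le_0_lt_compat; lra. }
  unfold alpha_n. fold m.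
  replace (v / (2 * q * m) - m / 2) with ((v / q - m * m) / (2 * m)) by (field; lra).
  apply Rdiv_lt_0_compat; lra.
Qed.

Definition psi_coef : nat -> R :=
  let s := s_par q kappa in
  hyp_coef n (s + v / (q * (INR n + s))) (1 - INR n - s + v / (q * (INR n + s))).

Lemma indicial_alpha_n : indicial q (s_par q kappa) v (alpha_n v q kappa n) (INR n) = 0.
Proof. pose proof n_add_s_par_gt0. unfold indicial, alpha_n. field. lra. Qed.

Lemma psi_coef_succ (k : nat) :
  psi_coef (S k) * (INR (S k) * (2 * alpha_n v q kappa n + INR (S k)))
  = psi_coef k * indicial q (s_par q kappa) v (alpha_n v q kappa n) (INR k).
Proof.
  pose proof n_add_s_par_gt0. pose proof alpha_n_gt0.
  unfold psi_coef. cbv zeta.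
  set (s := s_par q kappa) in *. set (al := alpha_n v q kappa n) in *.
  set (c := 1 - INR n - s + v / (q * (INR n + s))).
  (* c = 1 + 2 alpha_n and B_k = (k - n) (b + k): the 2F1 recurrence is the mode recurrence. *)
  assert (Hc : c = 1 + 2 * al) by (unfold c, al, alpha_n; fold s; field; lra).
  replace (2 * al + INR (S k)) with (c + INR k) by (rewrite Hc, S_INR; ring).
  rewrite hyp_coef_succ by lra. f_equal.
  unfold indicial, al, alpha_n. fold s. field. lra.
Qed.

Lemma psi_n_eq_mode_comb (r : R) : ln q < r ->
  psi_n v q kappa n r
  = mode_comb q (alpha_n v q kappa n) psi_coef n (mode q (s_par q kappa)) r.
Proof.
  intros Hr. pose proof (q_exp_neg_bounds q r q_gt0 Hr).
  unfold psi_n, rpow, mode_comb, psi_coef. cbv zeta.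
  destruct (Rle_dec (1 - q * exp (- r)) 0); [lra|].
  unfold hyp2F1_neg. rewrite scal_sum. apply sum_eq. intros k _.
  rewrite (Rmult_assoc (hyp_coef _ _ _ k)), mode_shift.
  unfold mode, Rpower, hyp_coef. rewrite exp_plus. ring.
Qed.

Lemma psi_n_at_ln_q : psi_n v q kappa n (ln q) = 0.
Proof.
  unfold psi_n, rpow. cbv zeta.
  rewrite exp_Ropp, exp_ln, Rinv_r, Rminus_diag by lra.
  destruct (Rle_dec 0 0); [ring | lra].
Qed.

Lemma psi_n_lim_p_infty : is_lim (psi_n v q kappa n) p_infty 0.
Proof.
  apply (is_lim_exp_decay _ (sum_f_R0 (fun k => Rabs (psi_coef k)) n) _ alpha_n_gt0).
  exists (ln q). intros r Hr. pose proof (q_exp_neg_bounds q r q_gt0 Hr) as Hz.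
  pose proof (s_par_ge_half q kappa).
  unfold psi_n, psi_coef. cbv zeta.
  set (s := s_par q kappa) in *.
  set (b := s + v / (q * (INR n + s))). set (c := 1 - INR n - s + v / (q * (INR n + s))).
  set (E := exp (- alpha_n v q kappa n * r)).
  assert (HE : 0 < E) by apply exp_pos.
  assert (Hp : 0 <= rpow (1 - q * exp (- r)) s <= 1) by (apply rpow_le_1; lra).
  assert (HF : Rabs (hyp2F1_neg n b c (q * exp (- r)))
               <= sum_f_R0 (fun k => Rabs (hyp_coef n b c k)) n)
    by (apply Rabs_hyp2F1_neg_le; lra).
  pose proof (Rabs_pos (hyp2F1_neg n b c (q * exp (- r)))).
  rewrite !Rabs_mult, (Rabs_pos_eq E), (Rabs_pos_eq (rpow _ _)) by lra.
  rewrite Rmult_assoc, (Rmult_comm _ E). apply Rmult_le_compat_l; nra.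
Qed.

Lemma psi_n_derivatives (r : R) : ln q < r ->
  is_derive (psi_n v q kappa n) r
    (mode_comb q (alpha_n v q kappa n) psi_coef n (dmode q (s_par q kappa)) r)
  /\ is_derive (Derive (psi_n v q kappa n)) r
    (mode_comb q (alpha_n v q kappa n) psi_coef n (d2mode q (s_par q kappa)) r).
Proof.
  apply (is_derive_Derive_on_open (fun t => ln q < t) _
           (mode_comb q (alpha_n v q kappa n) psi_coef n (mode q (s_par q kappa)))).
  - intros t Ht. exact (open_gt (ln q) t Ht).
  - exact psi_n_eq_mode_comb.
  - intros t Ht. pose proof (q_exp_neg_bounds q t q_gt0 Ht).
    apply is_derive_mode_comb. intro beta. apply is_derive_mode. lra.
  - intros t Ht. pose proof (q_exp_neg_bounds q t q_gt0 Ht).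
    apply is_derive_mode_comb. intro beta. apply is_derive_dmode. lra.
Qed.

Lemma psi_n_eigen (r : R) : ln q < r ->
  - Derive_n (psi_n v q kappa n) 2 r + potential v q kappa r * psi_n v q kappa n r
  = E_n v q kappa n * psi_n v q kappa n r.
Proof.
  intros Hr. pose proof (q_exp_neg_bounds q r q_gt0 Hr).
  change (Derive_n (psi_n v q kappa n) 2 r) with (Derive (Derive (psi_n v q kappa n)) r).
  rewrite (is_derive_unique _ _ _ (proj2 (psi_n_derivatives r Hr))), (psi_n_eq_mode_comb r Hr).
  replace (potential v q kappa r)
    with (potential v q (q * s_par q kappa * (s_par q kappa - 1)) r)
    by (f_equal; symmetry; exact (kappa_eq_s_par q kappa q_gt0 kappa_ge)).
  unfold E_n. apply mode_comb_eigen; [exact psi_coef_succ | exact indicial_alpha_n | lra | lra].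
Qed.

End Eigenfunction.

Theorem mainTheorem4 (v q kappa : R) :
  0 < v -> 0 < q -> - q / 4 <= kappa ->
  (forall n : nat, INR n + s_par q kappa < sqrt (v / q) ->
     (forall r, ln q < r -> ex_derive (psi_n v q kappa n) r) /\
     (forall r, ln q < r ->
        ex_derive (Derive (psi_n v q kappa n)) r /\
        - Derive_n (psi_n v q kappa n) 2 r
          + potential v q kappa r * psi_n v q kappa n r
        = E_n v q kappa n * psi_n v q kappa n r) /\
     psi_n v q kappa n (ln q) = 0 /\
     is_lim (psi_n v q kappa n) p_infty 0) /\
  (forall j : nat, kappa = q * INR j * (INR j + 1) ->
     s_par q kappa = INR j + 1 /\
     forall n : nat,
       E_n v q kappa n
       = - (v / (2 * q * (INR n + INR j + 1)) - (INR n + INR j + 1) / 2) ^ 2).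
Proof.
  intros Hv Hq Hk. split.
  - intros n Hn. split; [|split; [|split]].
    + intros r Hr. eexists. exact (proj1 (psi_n_derivatives v q kappa n Hq r Hr)).
    + intros r Hr. split.
      * eexists. exact (proj2 (psi_n_derivatives v q kappa n Hq r Hr)).
      * exact (psi_n_eigen v q kappa n Hv Hq Hk Hn r Hr).
    + exact (psi_n_at_ln_q v q kappa n Hq).
    + exact (psi_n_lim_p_infty v q kappa n Hv Hq Hn).
  - intros j Hj.
    assert (Hs : s_par q kappa = INR j + 1) by (rewrite Hj; exact (s_par_integer q j Hq)).
    split; [exact Hs|].
    intro n. unfold E_n, alpha_n. rewrite Hs, <- Rplus_assoc. reflexivity.
Qed.
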